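(* Let $f:\mathbb{R}^n\times\mathbb{R}^m\to\mathbb{R}$ be twice continuously differentiable, $\mu$-strongly convex in $x$ and $\mu$-strongly concave in $y$ ($\mu>0$), with $\|\nabla F(z)\|\le L$ for all $z$ and $\nabla F$ being $L_2$-Lipschitz, where $F(z)=(\nabla_x f(x,y);-\nabla_y f(x,y))$, $z=(x;y)$. Let $m(z)=\frac12\|F(z)\|^2$. Fix a point $z^k=(x^k;y^k)$, let $g^k=\nabla f(z^k)$, $H^k=\nabla^2 f(z^k)$, and for $\gamma>0$ define $$f_k(x,y;\gamma)=f(z^k)+\langle g^k,z-z^k\rangle+\tfrac12(z-z^k)^\top H^k(z-z^k)+\tfrac{\gamma}{3}\|x-x^k\|^3-\tfrac{\gamma}{3}\|y-y^k\|^3.$$ Let $(\tilde x,\tilde y)$ be the saddle point of $\min_x\max_y f_k(x,y;\gamma)$ and set $u^k=\tilde x-x^k$, $v^k=\tilde y-y^k$, $d^k=(u^k;v^k)$. Then, if $\gamma=\gamma^k>0$ is chosen small enough, $\gamma^k(\|u^k\|+\|v^k\|)<\mu$, and consequently $d^k$ is a descent direction for $m$ at $z^k$: $$\langle\nabla m(z^k),d^k\rangle\le-\frac{\mu^2}{2}\|d^k\|^2.$$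
   Context: $\|\cdot\|$ is the Euclidean norm for vectors and the largest singular value for matrices. The saddle point $(\tilde x,\tilde y)$ is characterized by the first-order conditions $g_x^k+H_{xx}^ku^k+\gamma\|u^k\|u^k+H_{xy}^kv^k=0$ and $g_y^k+H_{yy}^kv^k-\gamma\|v^k\|v^k+(H_{xy}^k)^\top u^k=0$, where $g^k=(g^k_x;g^k_y)$ and $H^k$ has blocks $H^k_{xx},H^k_{xy},H^k_{yy}$. *)

From HB Require Import structures.
From mathcomp Require Import all_boot all_order all_algebra.
From mathcomp Require Import all_classical all_reals all_analysis.
Set Implicit Arguments. Unset Strict Implicit. Unset Printing Implicit Defensive.
Import Order.TTheory GRing.Theory Num.Theory.
Import numFieldNormedType.Exports.
Local Open Scope classical_set_scope.
Local Open Scope ring_scope.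

Section Defs.
Variable R : realType.

Definition innerp (k : nat) (a b : 'cV[R]_k) : R := (a^T *m b) 0 0.
Definition enorm (k : nat) (a : 'cV[R]_k) : R := Num.sqrt (innerp a a).

Definition opnorm (p q : nat) (A : 'M[R]_(p, q)) : R :=
  sup [set enorm (A *m v) | v in [set v : 'cV[R]_q | enorm v <= 1]].

Definition basis_vec (k : nat) (i : 'I_k) : 'cV[R]_k := delta_mx i 0.
Definition partialD (k : nat) (g : 'cV[R]_k -> R) (i : 'I_k) (z : 'cV[R]_k) : R :=
  'D_(basis_vec i) g z.

Definition gradv (k : nat) (g : 'cV[R]_k -> R) (z : 'cV[R]_k) : 'cV[R]_k :=
  \col_i partialD g i z.

Definition hessmx (k : nat) (g : 'cV[R]_k -> R) (z : 'cV[R]_k) : 'M[R]_k :=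
  \matrix_(i, j) partialD (partialD g j) i z.

Definition jacmx (p q : nat) (G : 'cV[R]_p -> 'cV[R]_q) (z : 'cV[R]_p)
  : 'M[R]_(q, p) :=
  \matrix_(i, j) partialD (fun w => G w i 0) j z.

(* Twice continuously differentiable: all partial derivatives of order <= 2
   exist everywhere and are continuous (equivalent to C^2 in finite dim). *)
Definition C2 (k : nat) (g : 'cV[R]_k -> R) : Prop :=
  continuous g /\
  (forall i z, derivable g z (basis_vec i)) /\
  (forall i, continuous (partialD g i)) /\
  (forall i j z, derivable (partialD g i) z (basis_vec j)) /\
  (forall i j, continuous (partialD (partialD g i) j)).

Definition strongly_convex (k : nat) (mu : R) (h : 'cV[R]_k -> R) : Prop :=
  forall (a b : 'cV[R]_k) (t : R), 0 <= t <= 1 ->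
    h (t *: a + (1 - t) *: b) <=
      t * h a + (1 - t) * h b - mu / 2 * t * (1 - t) * enorm (a - b) ^+ 2.

Definition strongly_concave (k : nat) (mu : R) (h : 'cV[R]_k -> R) : Prop :=
  strongly_convex mu (fun a => - h a).

Section Saddle.
Variables n m : nat.
(* f is defined on R^n x R^m, represented on R^(n+m) with z = (x;y) = col_mx x y. *)
Variable f : 'cV[R]_(n + m) -> R.

Definition Fop (z : 'cV[R]_(n + m)) : 'cV[R]_(n + m) :=
  col_mx (usubmx (gradv f z)) (- dsubmx (gradv f z)).

Definition merit (z : 'cV[R]_(n + m)) : R := 1 / 2 * enorm (Fop z) ^+ 2.

Definition fmodel (zk : 'cV[R]_(n + m)) (gamma : R)
    (x : 'cV[R]_n) (y : 'cV[R]_m) : R :=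
  let z := col_mx x y in
  f zk + innerp (gradv f zk) (z - zk)
  + 1 / 2 * ((z - zk)^T *m hessmx f zk *m (z - zk)) 0 0
  + gamma / 3 * enorm (x - usubmx zk) ^+ 3
  - gamma / 3 * enorm (y - dsubmx zk) ^+ 3.

End Saddle.

Definition is_saddle (n m : nat) (h : 'cV[R]_n -> 'cV[R]_m -> R)
    (xt : 'cV[R]_n) (yt : 'cV[R]_m) : Prop :=
  forall x y, h xt y <= h xt yt /\ h xt yt <= h x yt.

End Defs.

(* Write g, H for the gradient and the Hessian of f at z^k, d = (u; v) and
   w = g + H d.  Moving the saddle point of the model along x and along y shows
   that it is stationary: w = (-gamma |u| u; gamma |v| v).  Strong convexity and
   concavity give <u, H_xx u> >= mu |u|^2 and <v, H_yy v> <= -mu |v|^2, so for the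
   reflected vector d' = (u; -v) the symmetry of H yields <d', H d> >= mu |d|^2,
   while <d', w> <= 0; by Cauchy-Schwarz, mu |d| <= |g| and mu |d| <= |H d|.
   Finally grad m(z^k) = H g, so <grad m, d> = <w, H d> - |H d|^2 with
   |w| <= gamma |d|^2, and gamma <= mu^2 / (4 (|g| + 1)) forces gamma |d| <= mu / 4.
   Since f is only assumed C^2 through its partial derivatives, the symmetry of H
   (Schwarz) and the second-order form of strong convexity are derived from the
   mean value theorem along lines. *)

From HB Require Import structures.
From mathcomp Require Import all_boot all_order all_algebra.
From mathcomp Require Import all_classical all_reals all_analysis.
From mathcomp Require Import ring lra.
Set Implicit Arguments. Unset Strict Implicit. Unset Printing Implicit Defensive.
Import Order.TTheory GRing.Theory Num.Theory.
Import numFieldNormedType.Exports.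
Local Open Scope classical_set_scope.
Local Open Scope ring_scope.

Section InnerProduct.
Variables (R : realType) (p : nat).
Implicit Types (a b c : 'cV[R]_p) (t : R).

Lemma innerpE a b : innerp a b = \sum_i a i 0 * b i 0.
Proof. by rewrite /innerp !mxE; apply: eq_bigr => i _; rewrite mxE. Qed.

Lemma innerpC a b : innerp a b = innerp b a.
Proof. by rewrite !innerpE; apply: eq_bigr => i _; rewrite mulrC. Qed.

Lemma innerpDr a b c : innerp a (b + c) = innerp a b + innerp a c.
Proof. by rewrite !innerpE -big_split; apply: eq_bigr => i _; rewrite mxE mulrDr. Qed.

Lemma innerpZr a t b : innerp a (t *: b) = t * innerp a b.
Proof. by rewrite !innerpE mulr_sumr; apply: eq_bigr => i _; rewrite mxE mulrCA. Qed.

Lemma innerpNr a b : innerp a (- b) = - innerp a b.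
Proof. by rewrite -scaleN1r innerpZr mulN1r. Qed.

Lemma innerpBr a b c : innerp a (b - c) = innerp a b - innerp a c.
Proof. by rewrite innerpDr innerpNr. Qed.

Lemma innerpDl a b c : innerp (b + c) a = innerp b a + innerp c a.
Proof. by rewrite ![innerp _ a]innerpC innerpDr. Qed.

Lemma innerpZl a t b : innerp (t *: b) a = t * innerp b a.
Proof. by rewrite ![innerp _ a]innerpC innerpZr. Qed.

Lemma innerpNl a b : innerp (- b) a = - innerp b a.
Proof. by rewrite ![innerp _ a]innerpC innerpNr. Qed.

Lemma innerpBl a b c : innerp (b - c) a = innerp b a - innerp c a.
Proof. by rewrite innerpDl innerpNl. Qed.

Lemma innerp0l a : innerp 0 a = 0.
Proof. by rewrite innerpE big1 // => i _; rewrite mxE mul0r. Qed.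

Lemma innerp_ge0 a : 0 <= innerp a a.
Proof. by rewrite innerpE; apply: sumr_ge0 => i _; rewrite -expr2 sqr_ge0. Qed.

Lemma innerp_eq0 a : (innerp a a == 0) = (a == 0).
Proof.
apply/eqP/eqP => [|->]; last exact: innerp0l.
rewrite innerpE => /psumr_eq0P a0; apply/matrixP => i j; rewrite (ord1 j) mxE.
have /eqP : a i 0 * a i 0 = 0 by apply: a0 => // k _; rewrite -expr2 sqr_ge0.
by rewrite mulf_eq0 orbb => /eqP.
Qed.

Lemma enorm_ge0 a : 0 <= enorm a.
Proof. exact: sqrtr_ge0. Qed.

Lemma enorm_sqr a : enorm a ^+ 2 = innerp a a.
Proof. by rewrite sqr_sqrtr // innerp_ge0. Qed.

Lemma innerp_CauchySchwarz a b : `|innerp a b| <= enorm a * enorm b.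
Proof.
rewrite -ler_sqr ?nnegrE ?mulr_ge0 ?enorm_ge0 // exprMn !enorm_sqr.
rewrite (real_normK (num_real _)).
have [b0|bn0] := eqVneq b 0; first by rewrite b0 innerpC !innerp0l expr0n mulr0.
have B0 : 0 < innerp b b by rewrite lt_def innerp_eq0 bn0 innerp_ge0.
have := innerp_ge0 (innerp b b *: a - innerp a b *: b).
rewrite !(innerpBl, innerpBr, innerpZl, innerpZr) (innerpC b a).
nra.
Qed.

Lemma enormD a b : enorm (a + b) <= enorm a + enorm b.
Proof.
rewrite -ler_sqr ?nnegrE ?addr_ge0 ?enorm_ge0 // sqrrD !enorm_sqr.
rewrite innerpDl !innerpDr (innerpC b a) mulr2n.
have := ler_norm (innerp a b); have := innerp_CauchySchwarz a b; lra.
Qed.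

Lemma enormZ t a : enorm (t *: a) = `|t| * enorm a.
Proof.
apply/eqP; rewrite -(@eqrXn2 _ 2) // ?mulr_ge0 ?enorm_ge0 //.
by rewrite exprMn !enorm_sqr innerpZl innerpZr (real_normK (num_real _)) mulrA.
Qed.

Lemma enormN a : enorm (- a) = enorm a.
Proof. by rewrite -scaleN1r enormZ normrN normr1 mul1r. Qed.

Lemma innerp_mulmx_tr (A : 'M[R]_p) a b : innerp a (A *m b) = innerp (A^T *m a) b.
Proof.
rewrite !innerpE; under eq_bigr do rewrite mxE big_distrr.
rewrite exchange_big; apply: eq_bigr => j _; rewrite mxE big_distrl.
by apply: eq_bigr => i _; rewrite !mxE /=; ring.
Qed.

Lemma innerp_mulmx_sym (A : 'M[R]_p) a b : A^T = A ->
  innerp a (A *m b) = innerp (A *m a) b.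
Proof. by move=> sA; rewrite innerp_mulmx_tr sA. Qed.

Lemma innerp_mulmx_shift (H : 'M[R]_p) (d E : 'cV[R]_p) t :
    H^T = H ->
  innerp (d + t *: E) (H *m (d + t *: E))
  = innerp d (H *m d) + 2 * t * innerp E (H *m d) + t ^+ 2 * innerp E (H *m E).
Proof.
move=> sH; rewrite mulmxDr -scalemxAr innerpDl !innerpDr !innerpZl !innerpZr.
have sym : innerp d (H *m E) = innerp E (H *m d) by rewrite innerp_mulmx_sym // innerpC.
by rewrite sym; ring.
Qed.

End InnerProduct.

Section BlockVectors.
Variables (R : realType) (n m : nat).
Implicit Types (a c : 'cV[R]_n) (b d : 'cV[R]_m).

Lemma innerp_col_mx a b c d :
  innerp (col_mx a b) (col_mx c d) = innerp a c + innerp b d.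
Proof.
rewrite !innerpE big_split_ord /=.
by congr (_ + _); apply: eq_bigr => i _; rewrite ?col_mxEu ?col_mxEd.
Qed.

Lemma enorm_col_mx a b : enorm (col_mx a b) ^+ 2 = enorm a ^+ 2 + enorm b ^+ 2.
Proof. by rewrite !enorm_sqr innerp_col_mx. Qed.

Lemma col_mx_subr (z : 'cV[R]_(n + m)) (x : 'cV[R]_n) (y : 'cV[R]_m) :
  col_mx x y - z = col_mx (x - usubmx z) (y - dsubmx z).
Proof. by rewrite -{1}(vsubmxK z) opp_col_mx add_col_mx. Qed.

Lemma scale_col_mx_u_addr (z : 'cV[R]_(n + m)) (x : 'cV[R]_n) (t : R) :
  t *: col_mx x 0 + z = col_mx (t *: x + usubmx z) (dsubmx z).
Proof. by rewrite -{1}(vsubmxK z) scale_col_mx scaler0 add_col_mx add0r. Qed.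

Lemma scale_col_mx_d_addr (z : 'cV[R]_(n + m)) (y : 'cV[R]_m) (t : R) :
  t *: col_mx 0 y + z = col_mx (usubmx z) (t *: y + dsubmx z).
Proof. by rewrite -{1}(vsubmxK z) scale_col_mx scaler0 add_col_mx add0r. Qed.

End BlockVectors.

Section Lines.
Variables (R : realType) (k : nat).
Implicit Types (G : 'cV[R]_k -> R) (p w : 'cV[R]_k).

Let line_dq G p w t :
  (fun h : R => h^-1 *: (((fun s : R => G (s *: w + p)) \o shift t) (h *: (1 : R))
                         - G (t *: w + p)))
  = (fun h : R => h^-1 *: ((G \o shift (t *: w + p)) (h *: w) - G (t *: w + p))).
Proof. by apply/funext => h /=; rewrite [h *: 1]mulr1 scalerDl addrA. Qed.

Lemma derivable_line G p w t :
  derivable (fun s : R => G (s *: w + p)) t 1 <-> derivable G (t *: w + p) w.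
Proof. by rewrite /derivable line_dq. Qed.

Lemma derive_line G p w t :
  'D_1 (fun s : R => G (s *: w + p)) t = 'D_w G (t *: w + p).
Proof. by rewrite /derive line_dq. Qed.

Lemma is_derive_line G p w t df :
  is_derive (t *: w + p) w G df -> is_derive t 1 (fun s : R => G (s *: w + p)) df.
Proof.
case=> dG <-; apply: DeriveDef; first exact/derivable_line.
exact: derive_line.
Qed.

Lemma MVT_line G p w h : (forall q, derivable G q w) ->
  exists c : R, `|c| <= `|h| /\ G (h *: w + p) - G p = h * 'D_w G (c *: w + p).
Proof.
move=> dG; pose phi s := G (s *: w + p).
have dphi (x : R) : is_derive x (1 : R) phi ('D_w G (x *: w + p)).
  by apply: is_derive_line; apply: derivableP.
have cphi a b : {within `[a, b], continuous phi}.
  by apply: derivable_within_continuous => x _; case: (dphi x).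
have phi0 : phi 0 = G p by rewrite /phi scale0r add0r.
rewrite -phi0 -/(phi h); case: (ltgtP h 0) => [h0|h0|->].
- have [c] := MVT h0 (fun x _ => dphi x) (cphi h 0).
  rewrite in_itv /= => /andP[c1 c2] E; exists c.
  by rewrite !ltr0_norm //; split; lra.
- have [c] := MVT h0 (fun x _ => dphi x) (cphi 0 h).
  rewrite in_itv /= => /andP[c1 c2] E; exists c.
  by rewrite !gtr0_norm //; split; lra.
- by exists 0; rewrite normr0 lexx /phi scale0r add0r subrr mul0r.
Qed.

Let translate_dq G t q v :
  (fun h : R => h^-1 *: (((fun r => G (r + t)) \o shift q) (h *: v) - G (q + t)))
  = (fun h : R => h^-1 *: ((G \o shift (q + t)) (h *: v) - G (q + t))).
Proof. by apply/funext => h /=; rewrite addrA. Qed.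

Lemma derive_translate G t q v : 'D_v (fun r => G (r + t)) q = 'D_v G (q + t).
Proof. by rewrite /derive translate_dq. Qed.

Lemma derivable_translate G t q v :
  derivable (fun r => G (r + t)) q v <-> derivable G (q + t) v.
Proof. by rewrite /derivable translate_dq. Qed.

End Lines.

Section Partials.
Variables (R : realType) (k : nat).

Lemma continuous_coord_near (I : finType) (F : I -> 'cV[R]_k -> R) z :
    (forall j, {for z, continuous (F j)}) ->
  forall eps, 0 < eps -> exists2 d, 0 < d &
    forall q : 'cV[R]_k, (forall i, `|z i 0 - q i 0| < d) ->
      forall j, `|F j z - F j q| < eps.
Proof.
move=> cF eps e0.
have : \forall q \near z, forall j, `|F j z - F j q| < eps.
  apply: (@filter_forall _ _ (fun j q => `|F j z - F j q| < eps) _ (nbhs_filter z)) => j.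
  by have /cvgrPdist_lt/(_ eps e0) := cF j.
move/nbhs_ballP => [d d0 H]; exists d => // q Hq; apply: H.
by split => // i j; rewrite (ord1 j); exact: Hq.
Qed.

Lemma derivable_dq_near (phi : R -> R) a : derivable phi a 1 ->
  forall eps, 0 < eps -> exists2 d, 0 < d &
    forall h, h != 0 -> `|h| < d ->
      `|'D_1 phi a - h^-1 * (phi (h + a) - phi a)| <= eps.
Proof.
move=> /cvgrPdist_le dphi eps e0; have := dphi eps e0.
rewrite near_withinE => /nbhs_ballP[d d0 H]; exists d => // h h0 hd.
by have := H h; rewrite /ball /= sub0r normrN [h%:A]mulr1 => /(_ hd h0).
Qed.

Lemma basis_vec_coord_le1 (i l : 'I_k) : `|basis_vec R i l 0| <= 1.
Proof. by rewrite mxE; case: (_ && _); rewrite ?normr1 ?normr0. Qed.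

Lemma coord_dist_step (j l : 'I_k) (c : R) (y z : 'cV[R]_k) :
  `|z l 0 - (c *: basis_vec R j + (y + z)) l 0| <= `|c| + `|y l 0|.
Proof.
have -> : z l 0 - (c *: basis_vec R j + (y + z)) l 0 = - (c * basis_vec R j l 0 + y l 0).
  by rewrite !mxE; ring.
rewrite normrN; apply: le_trans (ler_normD _ _) _; rewrite normrM lerD2r.
by rewrite ler_piMr // basis_vec_coord_le1.
Qed.

Definition trunc_cV (j : nat) (w : 'cV[R]_k) : 'cV[R]_k :=
  \col_i (if (i < j)%N then w i 0 else 0).

Lemma trunc_cV0 w : trunc_cV 0 w = 0.
Proof. by apply/matrixP => i c; rewrite !mxE. Qed.

Lemma trunc_cV_full w : trunc_cV k w = w.
Proof. by apply/matrixP => i c; rewrite (ord1 c) !mxE ltn_ord. Qed.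

Lemma trunc_cVS w (j : 'I_k) :
  trunc_cV j.+1 w = w j 0 *: basis_vec R j + trunc_cV j w.
Proof.
apply/matrixP => i c; rewrite (ord1 c) !mxE /= ltnS leq_eqVlt.
have [/val_inj ->|nij] := eqVneq (i : nat) j; first by rewrite eqxx ltnn mulr1 addr0.
by rewrite (inj_eq val_inj) in nij; rewrite (negbTE nij) mulr0 add0r.
Qed.

Lemma coord_le_sum_abs (w : 'cV[R]_k) i : `|w i 0| <= \sum_l `|w l 0|.
Proof. by rewrite (bigD1 i) //= lerDl sumr_ge0. Qed.

Lemma trunc_cV_coord_le j w i : `|trunc_cV j w i 0| <= \sum_l `|w l 0|.
Proof.
rewrite mxE; case: ifP => _; last by rewrite normr0 sumr_ge0.
exact: coord_le_sum_abs.
Qed.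

Lemma is_derive_partials (g : 'cV[R]_k -> R) :
    (forall i z, derivable g z (basis_vec R i)) ->
    (forall i, continuous (partialD g i)) ->
  forall z w, is_derive z w g (\sum_i w i 0 * partialD g i z).
Proof.
move=> dg cg z w; set S := \sum_i _.
suff cv : (fun h : R => h^-1 *: ((g \o shift z) (h *: w) - g z)) @ 0^' --> S.
  by apply: DeriveDef; [apply/cvg_ex; exists S | exact: cvg_lim].
apply/cvgrPdist_le => eps e0.
set W := \sum_i `|w i 0|; have W0 : 0 <= W by apply: sumr_ge0.
have e'0 : 0 < eps / (W + 1) by apply: divr_gt0; lra.
have [d d0 Hd] := continuous_coord_near (fun i => cg i z) e'0.
rewrite near_withinE; apply/nbhs_ballP.
exists (d / (2 * W + 1)); first by apply: divr_gt0; lra.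
move=> h; rewrite /ball /= sub0r normrN => hd hn0.
have hpos : 0 < `|h| by rewrite normr_gt0.
have hW : `|h| * W + `|h| * W < d by move: hd; rewrite ltr_pdivlMr; lra.
pose step j := g (h *: trunc_cV j.+1 w + z) - g (h *: trunc_cV j w + z).
have tel : g (h *: w + z) - g z = \sum_(j < k) step j.
  rewrite -(big_mkord xpredT step) telescope_sumr //.
  by rewrite trunc_cV_full trunc_cV0 scaler0 add0r.
(* each step is a one-coordinate move, handled by the mean value theorem *)
have step_le (j : 'I_k) :
    `|step j - h * (w j 0 * partialD g j z)| <= `|h| * `|w j 0| * (eps / (W + 1)).
  rewrite /step trunc_cVS scalerDr scalerA -(addrA ((h * w j 0) *: _)).
  have [c [hc ->]] := MVT_line (h *: trunc_cV j w + z) (h * w j 0) (dg j).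
  set q := c *: basis_vec R j + _.
  have Hq i : `|z i 0 - q i 0| < d.
    apply: le_lt_trans (coord_dist_step _ _ _ _ _) (le_lt_trans _ hW).
    rewrite mxE normrM; apply: lerD; last by rewrite ler_wpM2l // trunc_cV_coord_le.
    by apply: le_trans hc _; rewrite normrM ler_wpM2l // coord_le_sum_abs.
  have -> : h * w j 0 * 'D_(basis_vec R j) g q - h * (w j 0 * partialD g j z)
     = h * w j 0 * (partialD g j q - partialD g j z) by rewrite /partialD; ring.
  rewrite !normrM ler_wpM2l ?mulr_ge0 // distrC ltW //; exact: Hd.
have sum_le : `|\sum_(j < k) step j - h * S| <= `|h| * eps.
  rewrite /S mulr_sumr -sumrB; apply: le_trans (ler_norm_sum _ _ _) _.
  apply: le_trans (ler_sum _ (fun j _ => step_le j)) _.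
  rewrite -mulr_suml -mulr_sumr -/W -mulrA ler_wpM2l // mulrA ler_pdivrMr; lra.
rewrite /= tel.
have -> : S - h^-1 *: \sum_(j < k) step j = - h^-1 * (\sum_(j < k) step j - h * S).
  by rewrite /GRing.scale /=; field.
by rewrite normrM normrN normfV ler_pdivrMl.
Qed.

End Partials.

Section Schwarz.
Variables (R : realType) (k : nat) (g : 'cV[R]_k -> R).
Hypothesis dg : forall i z, derivable g z (basis_vec R i).
Hypothesis ddg : forall i j z, derivable (partialD g i) z (basis_vec R j).
Arguments dg : clear implicits.
Arguments ddg : clear implicits.

Definition mixed_difference (i j : 'I_k) z (h : R) :=
  g (h *: basis_vec R i + z + h *: basis_vec R j) - g (h *: basis_vec R i + z)
  - g (z + h *: basis_vec R j) + g z.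

Lemma mixed_differenceC i j z h : mixed_difference i j z h = mixed_difference j i z h.
Proof.
have swap a b : a + z + b = b + z + a by rewrite addrC (addrC a z) addrA.
by rewrite /mixed_difference (swap (h *: basis_vec R j)) !(addrC z); ring.
Qed.

Lemma mixed_difference_MVT i j z h : exists c1 c2 : R,
  [/\ `|c1| <= `|h|, `|c2| <= `|h| &
      mixed_difference i j z h
      = h * h * partialD (partialD g i) j
                  (c2 *: basis_vec R j + (c1 *: basis_vec R i + z))].
Proof.
set a := basis_vec R i; set b := basis_vec R j.
pose G1 q := g (q + h *: b) - g q.
have dG1 q : derivable G1 q a.
  by apply: derivableB; [apply/derivable_translate; exact: dg | exact: dg].
have [c1 [hc1 E1]] := MVT_line z h dG1.
have [c2 [hc2 E2]] := MVT_line (c1 *: a + z) h (ddg i j).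
exists c1, c2; split => //.
have -> : mixed_difference i j z h = G1 (h *: a + z) - G1 z.
  by rewrite /G1 /mixed_difference; ring.
rewrite E1 deriveB; first last.
- exact: dg.
- by apply/derivable_translate; exact: dg.
by rewrite derive_translate [c1 *: a + z + _]addrC E2 mulrA.
Qed.

Lemma partialD_sym : (forall i j, continuous (partialD (partialD g i) j)) ->
  forall z i j, partialD (partialD g i) j z = partialD (partialD g j) i z.
Proof.
move=> cddg z i j; apply/eqP; rewrite -subr_eq0 -normr_le0.
apply/ler_addgt0Pr => e e0; rewrite add0r.
pose F (b : bool) := if b then partialD (partialD g i) j else partialD (partialD g j) i.
have e20 : 0 < e / 2 by rewrite divr_gt0.
have cF b : {for z, continuous (F b)} by case: b; exact: cddg.
have [d d0 near_z] := continuous_coord_near cF e20.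
pose h := d / 3; have h0 : 0 < h by rewrite divr_gt0.
have hd : h + h < d by rewrite /h; lra.
clearbody h.
have [c1 [c2 [hc1 hc2 Eij]]] := mixed_difference_MVT i j z h.
have [c1' [c2' [hc1' hc2' Eji]]] := mixed_difference_MVT j i z h.
rewrite (gtr0_norm h0) in hc1 hc2 hc1' hc2'.
have near2 (a b : 'I_k) c c' : `|c| <= h -> `|c'| <= h ->
    forall l, `|z l 0 - (c' *: basis_vec R b + (c *: basis_vec R a + z)) l 0| < d.
  move=> hc hc' l; apply: le_lt_trans (coord_dist_step _ _ _ _ _) (le_lt_trans _ hd).
  rewrite mxE normrM; apply: lerD => //; apply: le_trans hc.
  by rewrite ler_piMr // basis_vec_coord_le1.
have /= A1 := near_z _ (near2 i j _ _ hc1 hc2) true.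
have /= A2 := near_z _ (near2 j i _ _ hc1' hc2') false.
have hh : h * h != 0 by rewrite mulf_neq0 // gt_eqF.
move: Eji; rewrite -mixed_differenceC Eij => /(mulfI hh) E.
rewrite E in A1; rewrite distrC in A2.
set p := partialD (partialD g j) i _ in A1 A2.
apply/ltW; rewrite [e]splitr.
exact: le_lt_trans (ler_distD p _ _) (ltrD A1 A2).
Qed.

End Schwarz.

Section SecondDifference.
Variable R : realType.

Lemma ler_mul_approx (a D q e : R) : 0 < e ->
  `|D - q| <= e / (`|a| + 1) -> a * q <= a * D + e.
Proof.
move=> e0 qD; have : a * (q - D) <= `|a| * (e / (`|a| + 1)).
  by apply: le_trans (ler_norm _) _; rewrite normrM distrC ler_wpM2l.
have : `|a| * (e / (`|a| + 1)) <= e.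
  by rewrite mulrCA ger_pMr // ler_pdivrMr ?mul1r ?ltr_pwDr // lerDl.
lra.
Qed.

Lemma is_derive_reflect (psi dpsi : R -> R) (x : R) :
  is_derive (- x) (1 : R) psi (dpsi (- x)) ->
  is_derive x (1 : R) (fun t => psi (- t)) (- dpsi (- x)).
Proof.
move=> d; have := is_derive1_comp d (is_deriveN (is_derive_id x 1)).
by rewrite mulrN1.
Qed.

Lemma le_second_derivative (psi dpsi : R -> R) (D c a : R) :
    (forall t : R, is_derive t (1 : R) psi (dpsi t)) -> is_derive (0 : R) (1 : R) dpsi D ->
    (forall t, c * t ^+ 2 <= a * (psi t + psi (- t) - 2 * psi 0)) ->
  c <= a * D.
Proof.
(* The mean value theorem applied to chi on [0, s] gives xi in ]0, s[ with
   a (dpsi xi - dpsi (- xi)) >= 2 c xi, while dpsi (+- xi) = dpsi 0 +- xi (D + o(1)). *)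
move=> dpsi_ddpsi [ddpsi <-] second_diff; apply/ler_addgt0Pr => e e0.
have eps0 : 0 < e / (`|a| + 1) by rewrite divr_gt0 // ltr_pwDr.
have [del del0 dq_near] := derivable_dq_near ddpsi eps0.
pose chi := a \*: (psi + (fun t => psi (- t)) - cst (2 * psi 0)) - c \*: (fun t : R => t ^+ 2).
have chiE t : chi t = a * (psi t + psi (- t) - 2 * psi 0) - c * t ^+ 2 by [].
have dchi (x : R) : is_derive x (1 : R) chi (a * (dpsi x - dpsi (- x) - 0) - c * (2 * x)).
  apply: is_deriveB; apply: is_deriveZ; last first.
    have sqr := is_deriveX 2 (is_derive_id x (1 : R)).
    by apply: is_derive_eq sqr _; rewrite expr1 /GRing.scale /= mulr1.
  apply: is_deriveB.
  by apply: is_deriveD => //; apply: is_derive_reflect.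
pose s := del / 2; have s0 : 0 < s by rewrite divr_gt0.
have cchi : {within `[0, s], continuous chi}.
  by apply: derivable_within_continuous => x _; case: (dchi x).
have [xi] := MVT s0 (fun x _ => dchi x) cchi.
rewrite in_itv /= => /andP[xi0 xis].
have chi_s : 0 <= chi s by rewrite chiE subr_ge0.
have chi_0 : chi 0 = 0 by rewrite chiE oppr0 expr0n /=; ring.
rewrite chi_0 subr0 => E.
have xi_del : `|xi| < del by rewrite gtr0_norm //; rewrite /s in xis; lra.
have nxi : - xi != 0 by rewrite oppr_eq0 gt_eqF.
have nxi_del : `|- xi| < del by rewrite normrN.
have := dq_near xi (lt0r_neq0 xi0) xi_del; have := dq_near _ nxi nxi_del.
rewrite !addr0; set q1 := xi^-1 * _; set q2 := (- xi)^-1 * _ => q2D q1D.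
have dq : dpsi xi - dpsi (- xi) = xi * (q1 + q2).
  by rewrite /q1 /q2; field; rewrite lt0r_neq0.
have cq : 2 * c <= a * q1 + a * q2.
  have : 0 <= xi * (a * (q1 + q2) - 2 * c).
    by move: chi_s; rewrite E dq subr0 pmulr_lge0 ?subr_gt0 //; rewrite /s in xis *; lra.
  by rewrite pmulr_rge0 // subr_ge0 mulrDr.
have := ler_mul_approx e0 q1D; have := ler_mul_approx e0 q2D; lra.
Qed.

End SecondDifference.

Section HessianForm.
Variables (R : realType) (k : nat) (g : 'cV[R]_k -> R).

Lemma hessmx_form z (E : 'cV[R]_k) :
  \sum_i E i 0 * \sum_j E j 0 * partialD (partialD g i) j z
  = innerp E (hessmx g z *m E).
Proof.
rewrite innerpE; under eq_bigr do rewrite big_distrr.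
rewrite exchange_big; apply: eq_bigr => j _; rewrite !mxE big_distrr.
by apply: eq_bigr => i _; rewrite !mxE /=; ring.
Qed.

Hypothesis dg : forall i z, derivable g z (basis_vec R i).
Hypothesis cg : forall i, continuous (partialD g i).
Hypothesis ddg : forall i j z, derivable (partialD g i) z (basis_vec R j).
Hypothesis cddg : forall i j, continuous (partialD (partialD g i) j).

Lemma le_hessmx_form z (E : 'cV[R]_k) (c a : R) :
    (forall t : R, c * t ^+ 2 <= a * (g (t *: E + z) + g ((- t) *: E + z) - 2 * g z)) ->
  c <= a * innerp E (hessmx g z *m E).
Proof.
move=> second_diff; rewrite -hessmx_form.
pose dpsi t := \sum_i E i 0 * partialD g i (t *: E + z).
apply: (@le_second_derivative _ (fun t => g (t *: E + z)) dpsi); last first.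
  by move=> t; have := second_diff t; rewrite scale0r add0r.
- have -> : dpsi = \sum_i (E i 0 \*: (fun t : R => partialD g i (t *: E + z))).
    by apply/funext => t; rewrite fct_sumE.
  apply: is_derive_sum => i; apply: is_deriveZ; apply: is_derive_line.
  by rewrite scale0r add0r; apply: is_derive_partials.
- by move=> t; apply: is_derive_line; apply: is_derive_partials.
Qed.

End HessianForm.

Lemma strongly_convex_second_difference (R : realType) k (mu : R) (h : 'cV[R]_k -> R)
    x e (t : R) :
  strongly_convex mu h ->
  mu * enorm e ^+ 2 * t ^+ 2 <= h (t *: e + x) + h ((- t) *: e + x) - 2 * h x.
Proof.
move=> /(_ (t *: e + x) ((- t) *: e + x) (1 / 2)).
have mid : 1 / 2 *: (t *: e + x) + (1 - 1 / 2) *: ((- t) *: e + x) = x.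
  by apply/matrixP => i j; rewrite !mxE; field.
have diff : enorm (t *: e + x - ((- t) *: e + x)) ^+ 2 = 4 * t ^+ 2 * enorm e ^+ 2.
  have -> : t *: e + x - ((- t) *: e + x) = (2 * t) *: e.
    by apply/matrixP => i j; rewrite !mxE; ring.
  by rewrite enormZ exprMn (real_normK (num_real _)); ring.
have half : (0 <= 1 / 2 :> R) && (1 / 2 <= 1 :> R) by apply/andP; split; lra.
rewrite mid diff => /(_ half); lra.
Qed.

Lemma linear_term_eq0 (R : realFieldType) (P K : R) (r : R -> R) :
    (forall t, `|t| <= 1 -> 0 <= t * P + r t) ->
    (forall t, `|t| <= 1 -> `|r t| <= K * t ^+ 2) ->
  P = 0.
Proof.
move=> ge0 r_le; apply/eqP; rewrite -normr_le0; apply/ler_addgt0Pr => e e0.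
rewrite add0r; pose t := Num.min 1 (e / (`|K| + 1)).
have t0 : 0 < t by rewrite lt_min ltr01 divr_gt0 // ltr_pwDr.
have t1 : `|t| <= 1 by rewrite gtr0_norm // ge_min lexx.
have Kt : `|K| * t <= e.
  have tle : t <= e / (`|K| + 1) by rewrite ge_min lexx orbT.
  apply: le_trans (ler_wpM2l (normr_ge0 K) tle) _.
  by rewrite mulrCA ger_pMr // ler_pdivrMr ?mul1r ?ltr_pwDr // lerDl.
have bound (s : R) : `|s| <= 1 -> - (s * P) <= `|K| * s ^+ 2.
  move=> s1; have := ge0 s s1; have := ler_norm (r s); have := r_le s s1.
  have : K * s ^+ 2 <= `|K| * s ^+ 2 by rewrite ler_wpM2r ?sqr_ge0 ?ler_norm.
  lra.
have PtK : `|P| * t <= `|K| * t * t.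
  rewrite -(gtr0_norm t0) -normrM -mulrA -expr2 (gtr0_norm t0) ler_norml.
  have := bound t t1; have := bound (- t); rewrite normrN sqrrN mulNr opprK.
  move=> /(_ t1); lra.
by apply: le_trans Kt; rewrite -(ler_pM2r t0).
Qed.

Section CubicTerm.
Variables (R : realType) (p : nat).
Implicit Types (u e : 'cV[R]_p) (t : R).

Lemma enorm_dist_le u e t : `|enorm (u + t *: e) - enorm u| <= `|t| * enorm e.
Proof.
rewrite ler_distl -enormZ enormD andbT.
have := enormD (u + t *: e) (- (t *: e)); rewrite addrK enormN; lra.
Qed.

(* With N = |u + t e| and M = |u| one has
   N^3 - M^3 - 3 M t <u, e> = (N - M)^2 (N + M/2) + 3/2 M t^2 |e|^2. *)
Lemma enorm_cube_expansion u e t :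
  `|enorm (u + t *: e) ^+ 3 - enorm u ^+ 3 - 3 * enorm u * (t * innerp u e)|
    <= t ^+ 2 * (enorm e ^+ 2 * (3 * enorm u + `|t| * enorm e)).
Proof.
have N0 := enorm_ge0 (u + t *: e); have M0 := enorm_ge0 u; have A0 := enorm_ge0 e.
have NM : enorm (u + t *: e) ^+ 2
    = enorm u ^+ 2 + 2 * (t * innerp u e) + t ^+ 2 * enorm e ^+ 2.
  by rewrite !enorm_sqr innerpDl !innerpDr !innerpZl !innerpZr (innerpC e u); ring.
have dist := enorm_dist_le u e t.
have tt : `|t| ^+ 2 = t ^+ 2 := real_normK (num_real _).
have T0 := normr_ge0 t.
move: (enorm (u + t *: e)) (enorm u) (enorm e) (innerp u e) `|t| N0 M0 A0 NM dist tt T0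
  => N M A s T N0 M0 A0 NM dist tt T0.
have -> : N ^+ 3 - M ^+ 3 - 3 * M * (t * s)
    = (N - M) ^+ 2 * (N + M / 2) + 3 / 2 * M * (t ^+ 2 * A ^+ 2).
  have -> : t * s = (N ^+ 2 - M ^+ 2 - t ^+ 2 * A ^+ 2) / 2 by rewrite NM; field.
  by field.
have d2 : (N - M) ^+ 2 <= t ^+ 2 * A ^+ 2.
  by rewrite -tt -exprMn -real_normK ?num_real // lerXn2r ?nnegrE ?mulr_ge0.
have NMA : N <= M + T * A by move: dist; rewrite ler_distl; lra.
have h0 : 0 <= N + M / 2 by lra.
have P1 := mulr_ge0 (sqr_ge0 (N - M)) h0.
have P2 : 0 <= 3 / 2 * M * (t ^+ 2 * A ^+ 2).
  by apply: mulr_ge0; [apply: mulr_ge0 => //; lra | apply: mulr_ge0; apply: sqr_ge0].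
rewrite ger0_norm ?addr_ge0 //.
have : (N - M) ^+ 2 * (N + M / 2) <= t ^+ 2 * A ^+ 2 * (M + T * A + M / 2).
  by apply: ler_pM; rewrite ?sqr_ge0 //; lra.
have -> : t ^+ 2 * (A ^+ 2 * (3 * M + T * A))
    = t ^+ 2 * A ^+ 2 * (M + T * A + M / 2) + 3 / 2 * M * (t ^+ 2 * A ^+ 2) by field.
lra.
Qed.

Lemma cubic_stationary u (a : 'cV[R]_p) (B : 'cV[R]_p -> R) (kap : R) :
    (forall e t, 0 <= t * innerp e a + t ^+ 2 * B e
                      + kap / 3 * (enorm (u + t *: e) ^+ 3 - enorm u ^+ 3)) ->
  a = - (kap * enorm u) *: u.
Proof.
move=> ge0.
have orth e : innerp e (a + (kap * enorm u) *: u) = 0.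
  rewrite innerpDr innerpZr (innerpC e u).
  pose K := `|B e| + `|kap / 3| * (enorm e ^+ 2 * (3 * enorm u + enorm e)).
  pose r t := t ^+ 2 * B e
    + kap / 3 * (enorm (u + t *: e) ^+ 3 - enorm u ^+ 3 - 3 * enorm u * (t * innerp u e)).
  apply: (@linear_term_eq0 _ _ K r) => t t1.
    by have := ge0 e t; rewrite /r; lra.
  have cube : `|enorm (u + t *: e) ^+ 3 - enorm u ^+ 3 - 3 * enorm u * (t * innerp u e)|
      <= enorm e ^+ 2 * (3 * enorm u + enorm e) * t ^+ 2.
    apply: le_trans (enorm_cube_expansion u e t) _.
    rewrite [X in _ <= X]mulrC ler_wpM2l ?sqr_ge0 // ler_wpM2l ?exprn_ge0 ?enorm_ge0 //.
    by rewrite lerD2l ler_piMl ?enorm_ge0.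
  apply: le_trans (ler_normD _ _) _.
  rewrite [`|t ^+ 2 * _|]normrM [`|kap / 3 * _|]normrM (ger0_norm (sqr_ge0 t)).
  rewrite /K [(_ + _) * t ^+ 2]mulrDl [_ * t ^+ 2]mulrC lerD2l.
  by rewrite -[X in _ <= X]mulrA ler_wpM2l.
apply/eqP; rewrite scaleNr -addr_eq0 -innerp_eq0; apply/eqP; exact: orth.
Qed.

End CubicTerm.

Lemma ler_sqr_cancel (R : realFieldType) (c D X : R) :
  0 <= D -> 0 <= X -> c * D ^+ 2 <= D * X -> c * D <= X.
Proof.
move=> D0 X0; have [->|Dn0] := eqVneq D 0; first by rewrite mulr0.
have Dp : 0 < D by rewrite lt_def Dn0.
by rewrite expr2 mulrA [_ * D]mulrC ler_pM2l.
Qed.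

Lemma descent_inequality (R : realFieldType) (mu gam D G Y W X U V : R) :
    0 < mu -> 0 < gam -> 0 <= D -> 0 <= G -> 0 <= Y -> U <= D -> V <= D ->
    mu * D <= G -> mu * D <= Y -> W <= gam * D ^+ 2 -> X <= W * Y ->
    gam <= mu ^+ 2 / (4 * (G + 1)) ->
  gam * (U + V) < mu /\ X - Y ^+ 2 <= - (mu ^+ 2 / 2) * D ^+ 2.
Proof.
move=> mu0 gam0 D0 G0 Y0 UD VD DG DY WD XW gle.
have gamD : gam * D <= mu / 4.
  rewrite ler_pdivlMr ?mulr_gt0 ?ltr_pwDr // in gle.
  have := ler_wpM2r D0 gle; have := ler_wpM2l (ltW mu0) DG; nra.
split; first nra.
have h1 : W * Y <= gam * D ^+ 2 * Y by apply: ler_wpM2r.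
have h2 : gam * D ^+ 2 * Y <= mu / 4 * (D * Y).
  by rewrite expr2 mulrA -mulrA ler_wpM2r ?mulr_ge0.
have h3 : mu * D * Y <= Y ^+ 2 by rewrite expr2; apply: ler_wpM2r.
have h4 : mu ^+ 2 * D ^+ 2 <= Y ^+ 2.
  have muD0 := mulr_ge0 (ltW mu0) D0.
  by rewrite -exprMn !expr2 ler_pM.
have := mulr_ge0 (sqr_ge0 mu) (sqr_ge0 D).
lra.
Qed.

Section Descent.
Variables (R : realType) (n m : nat) (H : 'M[R]_(n + m)) (g : 'cV[R]_(n + m)).
Variables (u : 'cV[R]_n) (v : 'cV[R]_m) (mu gam : R).
Hypothesis H_sym : H^T = H.
Hypothesis mu_gt0 : 0 < mu.
Hypothesis gam_gt0 : 0 < gam.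
Hypothesis stationary :
  g + H *m col_mx u v = col_mx (- (gam * enorm u) *: u) ((gam * enorm v) *: v).
Hypothesis form_u : mu * enorm u ^+ 2 <= innerp (col_mx u 0) (H *m col_mx u 0).
Hypothesis form_v : innerp (col_mx 0 v) (H *m col_mx 0 v) <= - (mu * enorm v ^+ 2).

Let d := col_mx u v.
Let d' := col_mx u (- v).

Let enorm_reflect : enorm d' = enorm d.
Proof.
apply/eqP; rewrite -(@eqrXn2 _ 2) ?enorm_ge0 //.
by rewrite !enorm_col_mx enormN.
Qed.

Let reflect_form : mu * enorm d ^+ 2 <= innerp d' (H *m d).
Proof.
rewrite /d /d' enorm_col_mx.
have -> : col_mx u v = col_mx u 0 + col_mx 0 v by rewrite add_col_mx addr0 add0r.
have -> : col_mx u (- v) = col_mx u 0 - col_mx 0 v.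
  by rewrite opp_col_mx oppr0 add_col_mx addr0 add0r.
have sym : innerp (col_mx 0 v) (H *m col_mx u 0) = innerp (col_mx u 0) (H *m col_mx 0 v).
  by rewrite innerp_mulmx_sym // innerpC.
rewrite mulmxDr innerpBl !innerpDr sym addrKA mulrDr.
by apply: lerD => //; rewrite lerNr.
Qed.

Let reflect_stationary : innerp d' (g + H *m d) <= 0.
Proof.
rewrite stationary innerp_col_mx !innerpZr innerpNl -!enorm_sqr.
rewrite mulNr mulrN -opprD oppr_le0.
by rewrite addr_ge0 // !mulr_ge0 ?exprn_ge0 ?enorm_ge0 ?(ltW gam_gt0).
Qed.

Let mu_enorm_le_g : mu * enorm d <= enorm g.
Proof.
apply: ler_sqr_cancel; rewrite ?enorm_ge0 //.
have split_form : innerp d' (H *m d) = innerp d' (g + H *m d) - innerp d' g.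
  by rewrite innerpDr addrC addKr.
have := innerp_CauchySchwarz d' g; rewrite enorm_reflect.
have := ler_norm (- innerp d' g); rewrite normrN.
have := reflect_form; have := reflect_stationary; lra.
Qed.

Let mu_enorm_le_Hd : mu * enorm d <= enorm (H *m d).
Proof.
apply: ler_sqr_cancel; rewrite ?enorm_ge0 //; apply: le_trans reflect_form _.
by rewrite -enorm_reflect; apply: le_trans (ler_norm _) (innerp_CauchySchwarz _ _).
Qed.

Let enorm_stationary_le : enorm (g + H *m d) <= gam * enorm d ^+ 2.
Proof.
rewrite -ler_sqr ?nnegrE ?enorm_ge0 ?mulr_ge0 ?exprn_ge0 ?enorm_ge0 ?(ltW gam_gt0) //.
rewrite stationary !enorm_col_mx !enormZ normrN !ger0_norm ?mulr_ge0 ?enorm_ge0 ?(ltW gam_gt0) //.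
have := mulr_ge0 (sqr_ge0 (enorm u)) (sqr_ge0 (enorm v)).
have := mulr_ge0 (sqr_ge0 gam) (mulr_ge0 (sqr_ge0 (enorm u)) (sqr_ge0 (enorm v))).
move: (enorm u) (enorm v) => a b; nra.
Qed.

Lemma descent_direction : gam <= mu ^+ 2 / (4 * (enorm g + 1)) ->
  gam * (enorm u + enorm v) < mu /\
  innerp g (H *m d) <= - (mu ^+ 2 / 2) * enorm d ^+ 2.
Proof.
move=> gam_le.
have ud : enorm u <= enorm d.
  by rewrite -ler_sqr ?nnegrE ?enorm_ge0 // enorm_col_mx lerDl sqr_ge0.
have vd : enorm v <= enorm d.
  by rewrite -ler_sqr ?nnegrE ?enorm_ge0 // enorm_col_mx lerDr sqr_ge0.
have -> : innerp g (H *m d) = innerp (g + H *m d) (H *m d) - enorm (H *m d) ^+ 2.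
  by rewrite enorm_sqr innerpDl addrK.
apply: (descent_inequality mu_gt0 gam_gt0 (enorm_ge0 _) (enorm_ge0 _) (enorm_ge0 _) ud vd
  mu_enorm_le_g mu_enorm_le_Hd enorm_stationary_le _ gam_le).
exact: le_trans (ler_norm _) (innerp_CauchySchwarz _ _).
Qed.

End Descent.

Section Saddle.
Variables (R : realType) (n m : nat) (f : 'cV[R]_(n + m) -> R).
Hypothesis f_C2 : C2 f.

Lemma hessmx_sym z : (hessmx f z)^T = hessmx f z.
Proof.
case: f_C2 => _ [dg [_ [ddg cddg]]]; apply/matrixP => i j; rewrite !mxE.
exact: partialD_sym.
Qed.

Lemma merit_sum : merit f = \sum_j (fun z => 1 / 2 * (partialD f j z * partialD f j z)).
Proof.
apply/funext => z; rewrite fct_sumE /merit enorm_sqr innerpE mulr_sumr.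
apply: eq_bigr => j _; rewrite /Fop; congr (_ * _).
by case: (split_ordP j) => j' ->; rewrite ?col_mxEu ?col_mxEd !mxE ?mulrNN.
Qed.

Lemma gradv_merit z : gradv (merit f) z = hessmx f z *m gradv f z.
Proof.
case: f_C2 => _ [_ [_ [ddg _]]]; apply/matrixP => i c; rewrite (ord1 c) !mxE /partialD.
have := @is_derive_sum _ _ _ _ (fun j z => 1 / 2 * (partialD f j z * partialD f j z)) z
  (basis_vec R i) _ (fun j => is_deriveZ (1 / 2) (is_deriveM (derivableP (ddg j i z))
                                                         (derivableP (ddg j i z)))).
move=> D; rewrite merit_sum derive_val; apply: eq_bigr => j _; rewrite !mxE.
by rewrite -/(partialD (partialD f j) i z) /GRing.scale /=; field.
Qed.

Variables (mu : R) (zk : 'cV[R]_(n + m)).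

Lemma hessmx_form_u (u : 'cV[R]_n) :
    (forall y, strongly_convex mu (fun x : 'cV[R]_n => f (col_mx x y))) ->
  mu * enorm u ^+ 2 <= innerp (col_mx u 0) (hessmx f zk *m col_mx u 0).
Proof.
case: f_C2 => _ [dg [cg [ddg cddg]]] cvx; rewrite -[X in _ <= X]mul1r.
apply: le_hessmx_form => // t; rewrite mul1r !scale_col_mx_u_addr.
have -> : f zk = f (col_mx (usubmx zk) (dsubmx zk)) by rewrite vsubmxK.
exact: strongly_convex_second_difference _ _ _ (cvx (dsubmx zk)).
Qed.

Lemma hessmx_form_d (v : 'cV[R]_m) :
    (forall x, strongly_concave mu (fun y : 'cV[R]_m => f (col_mx x y))) ->
  innerp (col_mx 0 v) (hessmx f zk *m col_mx 0 v) <= - (mu * enorm v ^+ 2).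
Proof.
case: f_C2 => _ [dg [cg [ddg cddg]]] ccv; rewrite lerNr -mulN1r.
apply: le_hessmx_form => // t; rewrite !scale_col_mx_d_addr.
have -> : f zk = f (col_mx (usubmx zk) (dsubmx zk)) by rewrite vsubmxK.
have := strongly_convex_second_difference (dsubmx zk) v t (ccv (usubmx zk)).
rewrite /=; lra.
Qed.

Let quad d := f zk + innerp (gradv f zk) d + 1 / 2 * innerp d (hessmx f zk *m d).

Let quad_shift d E t : quad (d + t *: E)
  = quad d + t * innerp E (gradv f zk + hessmx f zk *m d)
    + t ^+ 2 * (innerp E (hessmx f zk *m E) / 2).
Proof.
rewrite /quad innerp_mulmx_shift ?hessmx_sym // !innerpDr innerpZr (innerpC _ E).
by field.
Qed.

Let fmodelE gam x y : fmodel f zk gam x y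
  = quad (col_mx x y - zk) + gam / 3 * enorm (x - usubmx zk) ^+ 3
    - gam / 3 * enorm (y - dsubmx zk) ^+ 3.
Proof. by rewrite /fmodel /quad /= -mulmxA. Qed.

Variable gam : R.
Variables (xt : 'cV[R]_n) (yt : 'cV[R]_m).
Let u := xt - usubmx zk.
Let v := yt - dsubmx zk.
Let w := gradv f zk + hessmx f zk *m col_mx u v.

Let fmodel_shift_u e t : fmodel f zk gam (xt + t *: e) yt
  = fmodel f zk gam xt yt + t * innerp e (usubmx w)
    + t ^+ 2 * (innerp (col_mx e 0) (hessmx f zk *m col_mx e 0) / 2)
    + gam / 3 * (enorm (u + t *: e) ^+ 3 - enorm u ^+ 3).
Proof.
rewrite !fmodelE.
have -> : col_mx (xt + t *: e) yt - zk = col_mx u v + t *: col_mx e 0.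
  by rewrite col_mx_subr scale_col_mx scaler0 add_col_mx addr0 addrAC.
rewrite quad_shift col_mx_subr -/u -/v -/w [xt + _ - _]addrAC -/u.
have -> : innerp (col_mx e 0) w = innerp e (usubmx w).
  by rewrite -{1}[w]vsubmxK innerp_col_mx innerp0l addr0.
ring.
Qed.

Let fmodel_shift_d e t : fmodel f zk gam xt (yt + t *: e)
  = fmodel f zk gam xt yt + t * innerp e (dsubmx w)
    + t ^+ 2 * (innerp (col_mx 0 e) (hessmx f zk *m col_mx 0 e) / 2)
    - gam / 3 * (enorm (v + t *: e) ^+ 3 - enorm v ^+ 3).
Proof.
rewrite !fmodelE.
have -> : col_mx xt (yt + t *: e) - zk = col_mx u v + t *: col_mx 0 e.
  by rewrite col_mx_subr scale_col_mx scaler0 add_col_mx addr0 addrAC.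
rewrite quad_shift col_mx_subr -/u -/v -/w [yt + _ - _]addrAC -/v.
have -> : innerp (col_mx 0 e) w = innerp e (dsubmx w).
  by rewrite -{1}[w]vsubmxK innerp_col_mx innerp0l add0r.
ring.
Qed.

Lemma saddle_stationary : is_saddle (fmodel f zk gam) xt yt ->
  w = col_mx (- (gam * enorm u) *: u) ((gam * enorm v) *: v).
Proof.
move=> saddle; rewrite -[w]vsubmxK; congr col_mx.
  apply: (cubic_stationary (B := fun e => innerp (col_mx e 0) (hessmx f zk *m col_mx e 0) / 2)).
  move=> e t; have := (saddle (xt + t *: e) yt).2; rewrite fmodel_shift_u; lra.
apply: oppr_inj; rewrite -scaleNr.
apply: (cubic_stationary (B := fun e => - (innerp (col_mx 0 e) (hessmx f zk *m col_mx 0 e) / 2))).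
move=> e t; have := (saddle xt (yt + t *: e)).1; rewrite fmodel_shift_d innerpNr; lra.
Qed.

End Saddle.

Theorem proposition3p3 (R : realType) (n m : nat) (f : 'cV[R]_(n + m) -> R)
    (mu L L2 : R) (zk : 'cV[R]_(n + m)) :
  C2 f ->
  0 < mu ->
  (forall y : 'cV[R]_m, strongly_convex mu (fun x : 'cV[R]_n => f (col_mx x y))) ->
  (forall x : 'cV[R]_n, strongly_concave mu (fun y : 'cV[R]_m => f (col_mx x y))) ->
  (forall z, opnorm (jacmx (Fop f) z) <= L) ->
  (forall z w, opnorm (jacmx (Fop f) z - jacmx (Fop f) w) <= L2 * enorm (z - w)) ->
  exists gamma0 : R, 0 < gamma0 /\
    forall gamma : R, 0 < gamma <= gamma0 ->
    forall (xt : 'cV[R]_n) (yt : 'cV[R]_m),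
      is_saddle (fmodel f zk gamma) xt yt ->
      let u := xt - usubmx zk in
      let v := yt - dsubmx zk in
      let d := col_mx u v in
      gamma * (enorm u + enorm v) < mu /\
      innerp (gradv (merit f) zk) d <= - (mu ^+ 2 / 2) * enorm d ^+ 2.
Proof.
move=> f_C2 mu_gt0 cvx ccv _ _.
exists (mu ^+ 2 / (4 * (enorm (gradv f zk) + 1))); split.
  by rewrite divr_gt0 ?exprn_gt0 ?mulr_gt0 ?ltr_pwDr ?enorm_ge0.
move=> gam /andP[gam_gt0 gam_le] xt yt saddle u v d.
rewrite gradv_merit // innerpC innerp_mulmx_sym ?hessmx_sym // innerpC.
exact: descent_direction (hessmx_sym f_C2 zk) mu_gt0 gam_gt0 (saddle_stationary f_C2 saddle)
  (hessmx_form_u f_C2 zk u cvx) (hessmx_form_d f_C2 zk v ccv) gam_le.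
Qed.
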